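(* Let $n$ and $r$ be positive integers with $\frac{25}{9}r-1\le n<\frac{14}{5}r-1$. Then $\rho_2(K(n,r))=4$.
   Context: For integers $n\ge 2r$, the Kneser graph $K(n,r)$ has as vertices the $r$-element subsets of $[n]=\{1,\dots,n\}$, two vertices being adjacent iff they are disjoint. A $2$-packing of a graph $G$ is a set of vertices pairwise at distance at least $3$ in $G$; $\rho_2(G)$ is the maximum cardinality of a $2$-packing. *)

From mathcomp Require Import all_boot.
Set Implicit Arguments. Unset Strict Implicit. Unset Printing Implicit Defensive.

Definition kvertex (n r : nat) (A : {set 'I_n}) : bool := #|A| == r.

Definition kadj (n r : nat) (A B : {set 'I_n}) : bool :=
  [&& kvertex r A, kvertex r B & [disjoint A & B]].

Definition kdist_ge3 (n r : nat) (A B : {set 'I_n}) : bool :=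
  [&& A != B, ~~ kadj r A B & ~~ [exists C : {set 'I_n}, kadj r A C && kadj r C B]].

Definition two_packing (n r : nat) (P : {set {set 'I_n}}) : bool :=
  [forall A in P, kvertex r A] &&
  [forall A in P, forall B in P, (A != B) ==> kdist_ge3 r A B].

Definition rho2_eq (n r k : nat) : Prop :=
  (exists P : {set {set 'I_n}}, two_packing r P /\ #|P| = k) /\
  (forall P : {set {set 'I_n}}, two_packing r P -> #|P| <= k).

From mathcomp Require Import all_boot zify.
Set Implicit Arguments. Unset Strict Implicit. Unset Printing Implicit Defensive.

(* Two r-sets A, B are at distance at least 3 in K(n,r) iff they meet and no
   r-set avoids A :|: B, i.e. iff 1 <= |A :&: B| <= t := 3r - n - 1.  If five
   such sets existed, double counting the degrees d(x) of the points and using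
   3 d <= d^2 + 2 would give 10 r <= 2 n + 20 t, contradicting 25 r <= 9 (n + 1).
   Conversely, with p := r - 3t, attach t points to each pair {i, j} of [4] and
   p private points to each i: the sets A_i of points attached to i have size
   3t + p = r, pairwise meet in exactly t points, and use 6t + 4p <= n points. *)

Lemma subset_cardP (T : finType) (D : {set T}) k :
  reflect (exists2 C : {set T}, C \subset D & #|C| = k) (k <= #|D|).
Proof.
apply: (iffP (@card_geqP _ D k)) => [[s [uniq_s <- sD]] | [C CD <-]].
  by exists [set:: s]; [apply/subsetP => x; rewrite inE => /sD | rewrite cardsE; apply/card_uniqP].
by exists (enum C); rewrite enum_uniq -cardE; split=> // x; rewrite mem_enum => /(subsetP CD).
Qed.

Lemma card_sum_preimset (T1 T2 : finType) (A : {set T1 + T2}) :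
  #|A| = #|inl @^-1: A| + #|inr @^-1: A|.
Proof. by rewrite -!sum1_card big_sumType; congr (_ + _); apply: eq_bigl => x; rewrite inE. Qed.

Lemma card_pairs_containing (T : finType) (i j : T) :
  #|[set A : {set T} | (#|A| == 2) && ([set i; j] \subset A)]| = if i == j then #|T|.-1 else 1.
Proof.
case: eqP => [<- | /eqP ij].
- rewrite setUid -(cardsC1 i) -(@card_in_imset _ _ (fun k => [set i; k])); last first.
    move=> k k'; rewrite !inE => ki k'i eq_kk'.
    by have := set22 i k; rewrite eq_kk' !inE (negbTE ki) => /eqP.
  congr #|pred_of_set _|; apply/setP => A; rewrite !inE sub1set.
  apply/andP/imsetP => [[/cards2P [x [y [xy ->]]] /set2P [] ->] | [k]].
  + by exists y; rewrite // !inE eq_sym.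
  + by exists x; rewrite 1?setUC // !inE.
  + by rewrite !inE => ki ->; rewrite cards2 (eq_sym i) ki set21.
- rewrite -[RHS](cards1 [set i; j]); congr #|pred_of_set _|; apply/setP => A.
  rewrite inE; apply/idP/set1P => [/andP [/eqP cardA ijA] | ->]; last by rewrite cards2 ij subxx.
  by apply/esym/eqP; rewrite eqEcard ijA cards2 ij cardA.
Qed.

Section Degrees.
Variables (T : finType) (Q : {set {set T}}).

Definition degree (x : T) : nat := \sum_(A in Q) (x \in A : nat).

Lemma sum_degree : \sum_x degree x = \sum_(A in Q) #|A|.
Proof.
rewrite exchange_big; apply: eq_bigr => A _.
by rewrite -sum1_card [RHS]big_mkcond; apply: eq_bigr => x _; case: (x \in A).
Qed.

Lemma sum_degree_sqr : \sum_x degree x ^ 2 = \sum_(A in Q) \sum_(B in Q) #|A :&: B|.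
Proof.
under eq_bigr => x _ do rewrite -mulnn big_distrlr /=.
rewrite exchange_big; apply: eq_bigr => A _; rewrite exchange_big; apply: eq_bigr => B _.
rewrite -sum1_card [RHS]big_mkcond; apply: eq_bigr => x _; rewrite inE.
by case: (x \in A); case: (x \in B).
Qed.

Lemma uniform_family_card_bound (r t : nat) :
  {in Q, forall A : {set T}, #|A| = r} ->
  {in Q &, forall A B : {set T}, A != B -> #|A :&: B| <= t} ->
  #|Q| * (2 * r) <= 2 * #|T| + #|Q| * #|Q|.-1 * t.
Proof.
move=> cardQ capQ.
(* [3 d <= d ^ 2 + 2] because [(d - 1) (d - 2) >= 0] *)
have deg_sqr : 3 * \sum_x degree x <= 2 * #|T| + \sum_x degree x ^ 2.
  have -> : 2 * #|T| = \sum_(x : T) 2 by rewrite big_const iter_addn_0 mulnC.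
  rewrite big_distrr -big_split /=; apply: leq_sum => x _.
  by rewrite -mulnn; case: (degree x) => [|[|[|d]]] //; nia.
have sum_cap : \sum_(A in Q) \sum_(B in Q) #|A :&: B| <= #|Q| * (r + #|Q|.-1 * t).
  rewrite -sum_nat_const; apply: leq_sum => A AQ.
  rewrite (bigD1 A) //= setIid cardQ // leq_add2l (cardsD1 A Q) AQ -sum_nat_const.
  rewrite [X in X <= _]big_mkcond [X in _ <= X]big_mkcond /=; apply: leq_sum => B _.
  rewrite !inE andbC; case: ifP => // /andP [BQ BA].
  by apply: capQ; rewrite // eq_sym.
move: deg_sqr; rewrite sum_degree sum_degree_sqr.
rewrite (eq_bigr (fun _ => r)) ?sum_nat_const //.
move: sum_cap; rewrite mulnDr mulnA; lia.
Qed.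
End Degrees.

Section KneserDistance.
Variables n r : nat.
Implicit Types A B C : {set 'I_n}.

Lemma kadjE A B : kvertex r A -> kvertex r B -> kadj r A B = [disjoint A & B].
Proof. by rewrite /kadj => -> ->. Qed.

Lemma kcommon_neighbourE A B : kvertex r A -> kvertex r B ->
  [exists C, kadj r A C && kadj r C B] = (r + #|A :|: B| <= n).
Proof.
move=> vA vB.
have -> : (r + #|A :|: B| <= n) = (r <= #|~: (A :|: B)|).
  by rewrite -[X in _ <= X](card_ord n) -(cardsC (A :|: B)) addnC leq_add2l.
apply/existsP/subset_cardP => [[C /andP [/and3P [_ vC dAC] /and3P [_ _ dCB]]] | [C CAB cC]].
  exists C; last exact/eqP.
  by rewrite setCU subsetI -!disjoints_subset disjoint_sym dAC.
have vC : kvertex r C by exact/eqP.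
exists C; rewrite /kadj vA vB vC /=.
by move: CAB; rewrite setCU subsetI -!disjoints_subset disjoint_sym => /andP [-> ->].
Qed.

Lemma kdist_ge3E A B : kvertex r A -> kvertex r B ->
  kdist_ge3 r A B = [&& A != B, A :&: B != set0 & n + #|A :&: B| < 3 * r].
Proof.
move=> vA vB; rewrite /kdist_ge3 kadjE // kcommon_neighbourE // -setI_eq0.
have := cardsUI A B; move: vA vB; rewrite /kvertex => /eqP -> /eqP ->.
move=> UI; congr [&& _, _ & _]; apply/idP/idP; lia.
Qed.
End KneserDistance.

Lemma two_packingP n r (P : {set {set 'I_n}}) :
  reflect ({in P, forall A, kvertex r A} /\
           {in P &, forall A B, A != B -> kdist_ge3 r A B})
          (two_packing r P).
Proof.
apply: (iffP andP) => [[/forall_inP vP /forall_inP dP] | [vP dP]].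
  by split=> // A B AP BP; move/forall_inP: (dP A AP) => /(_ B BP) /implyP.
by split; apply/forall_inP => // A AP; apply/forall_inP => B BP; apply/implyP; apply: dP.
Qed.

Lemma two_packing_subset n r (P Q : {set {set 'I_n}}) :
  Q \subset P -> two_packing r P -> two_packing r Q.
Proof.
move=> /subsetP QP /two_packingP [vP dP]; apply/two_packingP.
by split=> [A /QP /vP | A B /QP AP /QP BP] //; apply: dP.
Qed.

Lemma two_packing_card_bound n r (P : {set {set 'I_n}}) : two_packing r P ->
  #|P| * (2 * r) <= 2 * n + #|P| * #|P|.-1 * (3 * r - n - 1).
Proof.
move=> /two_packingP [vP dP]; rewrite -[X in _ <= 2 * X + _](card_ord n).
apply: uniform_family_card_bound => [A /vP /eqP // | A B AP BP AB].
by move: (dP A B AP BP AB); rewrite kdist_ge3E ?vP // => /and3P [_ _]; lia.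
Qed.

Lemma two_packing_card_le4 n r (P : {set {set 'I_n}}) :
  25 * r <= 9 * (n + 1) -> n.+2 <= 3 * r -> two_packing r P -> #|P| <= 4.
Proof.
move=> n_lo n_hi packP; rewrite leqNgt; apply/negP => /subset_cardP [Q QP cardQ].
by have := two_packing_card_bound (two_packing_subset QP packP); rewrite cardQ; lia.
Qed.

Section PairDesign.
Variables m t p : nat.

Definition pair_block : finType := {A in [set A : {set 'I_m} | #|A| == 2]}.

Definition design_point : finType := (pair_block * 'I_t + 'I_m * 'I_p)%type.

Definition design_set (i : 'I_m) : {set design_point} :=
  [set u : design_point | match u with inl (A, _) => i \in val A | inr (k, _) => k == i end].

Lemma card_design_point : #|design_point| = 'C(m, 2) * t + m * p.
Proof.
rewrite card_sum !card_prod !card_ord card_sig -[m in 'C(m, _)]card_ord -card_draws.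
by congr (_ * _ + _); apply: eq_card => A; rewrite inE.
Qed.

Lemma card_blocks_containing (i j : 'I_m) :
  #|[set A : pair_block | [set i; j] \subset val A]| = if i == j then m.-1 else 1.
Proof.
rewrite -sum1dep_card.
rewrite -(big_sub_cond [set A : {set 'I_m} | #|A| == 2] (fun A => [set i; j] \subset A) (fun=> 1)).
have := card_pairs_containing i j; rewrite card_ord => <-; rewrite sum1dep_card.
by apply: eq_card => A; rewrite !inE.
Qed.

Lemma card_design_setI (i j : 'I_m) :
  #|design_set i :&: design_set j| = (if i == j then m.-1 else 1) * t + (i == j) * p.
Proof.
have inl_part : inl @^-1: (design_set i :&: design_set j) =
                 setX [set A : pair_block | [set i; j] \subset val A] [set: 'I_t].
  by apply/setP => -[A s]; rewrite !inE subUset !sub1set andbT.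
rewrite card_sum_preimset inl_part cardsX cardsT card_ord card_blocks_containing; congr (_ + _).
case: eqVneq => [<- | ij].
  have -> : inr @^-1: (design_set i :&: design_set i) = setX [set i] [set: 'I_p].
    by apply/setP => -[k s]; rewrite !inE andbb andbT.
  by rewrite cardsX cards1 cardsT card_ord mul1n.
apply/eqP; rewrite mul0n cards_eq0; apply/eqP/setP => -[k s]; rewrite !inE.
by apply/negbTE; apply: contra ij => /andP [/eqP <- ->].
Qed.
End PairDesign.

Lemma exists_two_packing_design n r m t p :
  r = m.-1 * t + p -> 0 < t < r -> 'C(m, 2) * t + m * p <= n -> n + t < 3 * r ->
  exists P : {set {set 'I_n}}, two_packing r P /\ #|P| = m.
Proof.
move=> def_r /andP [t_gt0 t_lt_r] design_le_n n_lt.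
have card_le_n : #|design_point m t p| <= n by rewrite card_design_point.
pose f (u : design_point m t p) : 'I_n := widen_ord card_le_n (enum_rank u).
have f_inj : injective f by move=> u v /(congr1 val) /= /val_inj /enum_rank_inj.
pose B i := f @: design_set t p i.
have cardBI i j : #|B i :&: B j| = if i == j then r else t.
  rewrite -imsetI; last exact: in2W.
  by rewrite card_imset // card_design_setI def_r; case: eqP => _; lia.
have cardB i : #|B i| = r by rewrite -[B i]setIid cardBI eqxx.
have B_inj : injective B.
  move=> i j eqB; apply/eqP; apply: contraTT t_lt_r => /negbTE neq_ij.
  by have := cardBI i j; rewrite neq_ij eqB setIid cardB => ->; rewrite ltnn.
exists (B @: setT); rewrite card_imset // cardsT card_ord; split=> //.
apply/two_packingP; split=> [_ /imsetP [i _ ->] | _ _ /imsetP [i _ ->] /imsetP [j _ ->] neqB].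
  by rewrite /kvertex cardB.
have neq_ij : i != j by apply: contraNneq neqB => ->.
rewrite kdist_ge3E ?/kvertex ?cardB // neqB -card_gt0 cardBI (negbTE neq_ij).
by rewrite t_gt0 n_lt.
Qed.

Theorem corollary4p10 (n r : nat) :
  0 < n -> 0 < r -> 25 * r <= 9 * (n + 1) -> 5 * (n + 1) < 14 * r ->
  rho2_eq n r 4.
Proof.
move=> _ _ n_lo n_hi; split; last by move=> P; apply: two_packing_card_le4; lia.
pose t := 3 * r - n - 1.
have C42 : 'C(4, 2) = 6 by [].
by apply: (@exists_two_packing_design n r 4 t (r - 3 * t)); rewrite ?C42 /t; lia.
Qed.
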